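(* Let $\Omega$ be a Stone signature and let $\mathcal S$ be an arbitrary Stone pseudovariety of $\Omega$-algebras. Let $\varphi:S\to T$ be an onto continuous homomorphism of Stone topological $\Omega$-algebras where $S$ is residually $\mathcal S$. Then $T$ is also residually $\mathcal S$.
   Context: A Stone signature is $\Omega=\biguplus_n\Omega_n$ with each $\Omega_n$ a compact Hausdorff 0-dimensional space. A Stone topological $\Omega$-algebra is a compact Hausdorff 0-dimensional space $A$ with continuous evaluation maps $\Omega_n\times A^n\to A$. A Stone pseudovariety is a nonempty class of Stone topological $\Omega$-algebras closed under images by onto continuous homomorphisms that are Stone topological algebras, closed subalgebras, and finite direct products. An algebra is residually $\mathcal S$ if any two distinct elements are separated by a continuous homomorphism into a member of $\mathcal S$. *)

From HB Require Import structures.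
From mathcomp Require Import all_boot all_order.
From mathcomp Require Import all_classical all_reals all_analysis.
Set Implicit Arguments. Unset Strict Implicit. Unset Printing Implicit Defensive.
Local Open Scope classical_set_scope.

Definition zero_dim (T : topologicalType) : Prop :=
  forall (x : T) (U : set T), open U -> U x ->
    exists V : set T, [/\ clopen V, V x & V `<=` U].

Definition stone_space (T : topologicalType) : Prop :=
  [/\ compact [set: T], hausdorff_space T & zero_dim T].

(* A Stone signature is Omega = disjoint union of the Omega n, n : nat, each
   a Stone space; we represent it by the family Omega : nat -> topologicalType. *)

(* A topological Omega-algebra: a space with evaluation maps
   Omega n x A^n -> A ; A^n is 'I_n -> A, topologized by the
   product topology {ptws 'I_n -> A} in stone_alg. *)
Record talg (Omega : nat -> topologicalType) := TAlg {
  car :> topologicalType;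
  ops : forall n, Omega n -> ('I_n -> car) -> car }.

Definition stone_alg Omega (A : talg Omega) : Prop :=
  stone_space A /\
  forall n, continuous (fun p : Omega n * {ptws 'I_n -> car A} => @ops Omega A n p.1 p.2).

Definition is_hom Omega (A B : talg Omega) (f : A -> B) : Prop :=
  forall n (w : Omega n) (a : 'I_n -> A), f (@ops Omega A n w a) = @ops Omega B n w (f \o a).

Definition prod_alg Omega (I : finType) (A : I -> talg Omega) : talg Omega :=
  @TAlg Omega (prod_topology (fun i : I => car (A i)) : topologicalType)
    (fun n w a => fun i => @ops Omega (A i) n w (fun k => a k i)).

(* Closure under closed subalgebras is expressed via
   injective continuous homomorphisms from Stone algebras (their images are
   exactly the closed subalgebras, up to isomorphism). *)
Definition stone_pseudovariety Omega (S : talg Omega -> Prop) : Prop :=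
  [/\ exists A, S A,
      forall A, S A -> stone_alg A,
      forall (A B : talg Omega) (f : A -> B), S A -> stone_alg B ->
        is_hom f -> continuous f -> (forall y, exists x, f x = y) -> S B,
      forall (A B : talg Omega) (f : B -> A), S A -> stone_alg B ->
        is_hom f -> continuous f -> injective f -> S B
    & forall (I : finType) (A : I -> talg Omega),
        (forall i, S (A i)) -> S (prod_alg A)].

Definition residually Omega (S : talg Omega -> Prop) (A : talg Omega) : Prop :=
  forall x y : A, x <> y ->
    exists (B : talg Omega) (f : A -> B),
      [/\ S B, is_hom f, continuous f & f x <> f y].

From mathcomp Require Import all_boot all_order.
From mathcomp Require Import all_classical all_reals all_analysis.
From HB Require Import structures.
From mathcomp Require Import finmap.
Set Implicit Arguments. Unset Strict Implicit. Unset Printing Implicit Defensive.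
Local Open Scope classical_set_scope.

(* Let phi s1 <> phi s2, let C be a clopen subset of T containing phi s1 but
   not phi s2, and D := phi^-1 C, a clopen subset of S.  The syntactic
   congruence of D has a Stone quotient Q of S (embedded in the Cantor space
   of sets of unary polynomials) separating s1 from s2; as D is a union of
   classes of ker phi, Q is also a quotient of T.  By compactness of
   D x (S \ D), finitely many of the homomorphisms witnessing that S is
   residually SS separate D from its complement.  Their product f : S -> B
   has B in SS and a kernel contained in the syntactic congruence, so Q is a
   continuous image of the closed subalgebra f(S) of B, hence belongs to SS. *)

Lemma comp_continuous (X Y Z : topologicalType) (f : X -> Y) (g : Y -> Z) :
  continuous f -> continuous g -> continuous (g \o f).
Proof. by move=> cf cg x; apply: continuous_comp; [exact: cf | exact: cg]. Qed.

Lemma fst_continuous (T U : topologicalType) : continuous (@fst T U).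
Proof. by move=> [a b]; exact: cvg_fst. Qed.

Lemma snd_continuous (T U : topologicalType) : continuous (@snd T U).
Proof. by move=> [a b]; exact: cvg_snd. Qed.

Lemma pair_continuous (X T U : topologicalType) (f : X -> T) (g : X -> U) :
  continuous f -> continuous g -> continuous (fun x => (f x, g x)).
Proof. by move=> cf cg x; apply: cvg_pair; [exact: cf | exact: cg]. Qed.

Lemma prod_topology_continuous (X : topologicalType) (I : Type)
    (K : I -> topologicalType) (f : X -> prod_topology K) :
  (forall i, continuous (fun x => f x i)) -> continuous f.
Proof.
move=> cf x; apply/cvg_sup => i.
by apply: (@continuous_comp_initial _ _ _ (fun g : prod_topology K => g i)).
Qed.

Lemma ptws_comp_continuous (I : eqType) (X Y : topologicalType) (g : X -> Y) :
  continuous g -> continuous (fun a : {ptws I -> X} => g \o a : {ptws I -> Y}).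
Proof.
move=> cg; apply: prod_topology_continuous => i.
have pi : continuous (fun a : {ptws I -> X} => a i).
  exact: (@proj_continuous I (fun=> X) i).
by have := comp_continuous pi cg.
Qed.

Lemma cluster_continuous (X Y : topologicalType) (f : X -> Y) (p q : X) :
  continuous f -> cluster (nbhs p) q -> cluster (nbhs (f p)) (f q).
Proof.
move=> cf pq A B /cf Ap /cf Bq.
by have [x [Ax Bx]] := pq _ _ Ap Bq; exists (f x).
Qed.

Lemma hausdorff_inj (X Y : topologicalType) (f : X -> Y) :
  continuous f -> injective f -> hausdorff_space Y -> hausdorff_space X.
Proof. by move=> cf injf hY p q /(cluster_continuous cf)/hY/injf. Qed.

Lemma hausdorff_prod (T U : topologicalType) :
  hausdorff_space T -> hausdorff_space U -> hausdorff_space (T * U)%type.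
Proof.
move=> hT hU [a b] [c d] pq; congr pair.
  exact: hT (cluster_continuous (@fst_continuous T U) pq).
exact: hU (cluster_continuous (@snd_continuous T U) pq).
Qed.

Lemma zero_dimensional_inj (X Y : topologicalType) (f : X -> Y) :
  continuous f -> injective f -> zero_dimensional Y -> zero_dimensional X.
Proof.
move=> cf injf zY x y xy.
have [|U [cU Ux Uy]] := zY (f x) (f y); first exact: contra_neq (@injf x y) xy.
by exists (f @^-1` U); split => //; exact: preimage_clopen.
Qed.

Lemma compact_setTX (T U : topologicalType) :
  compact [set: T] -> compact [set: U] -> compact [set: (T * U)%type].
Proof. by move=> cT cU; rewrite -setXTT; exact: compact_setX. Qed.

Lemma compact_ptws (I : eqType) (T : topologicalType) :
  compact [set: T] -> compact [set: {ptws I -> T}].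
Proof.
move=> cT; have := @tychonoff I (fun=> T) (fun=> setT) (fun=> cT).
by congr compact; apply/seteqP; split.
Qed.

Lemma stone_spaceP (T : topologicalType) :
  stone_space T <-> [/\ compact [set: T], hausdorff_space T & zero_dimensional T].
Proof.
split=> -[cT hT zT]; split=> //.
  move=> x y xy.
  have oy : open (~` [set y]).
    exact/closed_openC/accessible_closed_set1/hausdorff_accessible.
  have [V [cV Vx Vy]] := zT x _ oy (elimN eqP xy).
  by exists V; split => // /Vy; apply.
move=> x U oU Ux; have := zero_dimensional_cvg hT zT cT (x := x).
move=> /(_ U (open_nbhs_nbhs (conj oU Ux))) [V [Vx cV] VU].
by exists V.
Qed.

Lemma continuous_factor_compact (X Y Z : topologicalType)
    (q : X -> Y) (h : Y -> Z) :
  compact [set: X] -> hausdorff_space Y -> continuous q ->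
  (forall y, exists x, q x = y) -> continuous (h \o q) -> continuous h.
Proof.
(* q is a closed map, being a continuous map from a compact space to a
   Hausdorff one. *)
move=> cX hY cq sq chq; apply/continuous_closedP => F cF.
have -> : h @^-1` F = q @` ((h \o q) @^-1` F).
  apply/seteqP; split=> [y Fy|_ [x Fx <-]] //.
  by have [x qx] := sq y; exists x => //=; rewrite qx.
apply: compact_closed => //; apply: continuous_compact.
  exact: continuous_subspaceT.
by apply: subclosed_compact cX _ => //; exact: (continuous_closedP _).1.
Qed.

Lemma open_fun_neq (X Y : topologicalType) (f g : X -> Y) :
  hausdorff_space Y -> continuous f -> continuous g -> open [set x | f x <> g x].
Proof.
rewrite open_hausdorff => hY cf cg; rewrite openE => x /eqP /hY.
move=> [[P Q] /= [/set_mem Pf /set_mem Qg] [oP oQ /eqP PQ0]].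
have : nbhs x (f @^-1` P `&` g @^-1` Q).
  by apply: filterI; [apply: cf | apply: cg]; exact: open_nbhs_nbhs.
apply: filterS => y [Py Qy] fg.
suff : (P `&` Q) (g y) by rewrite PQ0.
by split=> //; rewrite -fg.
Qed.

Lemma clopen_indicator_continuous (T : topologicalType) (C : set T) :
  clopen C -> continuous (fun x => `[< C x >]).
Proof.
move=> [oC /closed_openC oNC] x U /nbhs_singleton Ux.
have [Cx|nCx] := pselect (C x).
  apply: filterS (open_nbhs_nbhs (conj oC Cx)) => y Cy /=.
  by rewrite (asboolT Cy) -(asboolT Cx).
apply: filterS (open_nbhs_nbhs (conj oNC nCx)) => y nCy /=.
by rewrite (asboolF nCy) -(asboolF nCx).
Qed.

(* [compact_cover] is only stated for pointed spaces. *)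
Local Definition pointed_at (T : topologicalType) (x : T) : Type := T.
HB.instance Definition _ (T : topologicalType) (x : T) :=
  Topological.on (pointed_at x).
HB.instance Definition _ (T : topologicalType) (x : T) :=
  isPointed.Build (pointed_at x) x.

Lemma compact_cover_compact (T : topologicalType) (A : set T) :
  compact A -> cover_compact A.
Proof.
have [-> _ I D f _ _|/set0P[x _] cA] := eqVneq A set0; first by exists fset0.
have : @compact (pointed_at x) A by [].
by rewrite compact_cover.
Qed.

Section ImageAlgebra.
Variables (Omega : nat -> topologicalType) (A : talg Omega).
Variables (X : topologicalType) (k : A -> X).
Hypothesis k_compat : forall n (w : Omega n) (a b : 'I_n -> A),
  (forall i, k (a i) = k (b i)) -> k (ops w a) = k (ops w b).

Definition image_space : topologicalType := set_type (range k).

Definition to_image (x : A) : image_space := SigSub (mem_set (imageT k x)).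

Lemma to_imageE x : set_val (to_image x) = k x.
Proof. by []. Qed.

Definition image_lift (y : image_space) : A := projT1 (cid2 (set_valP y)).

Lemma image_liftE y : k (image_lift y) = set_val y.
Proof. by rewrite /image_lift; case: cid2. Qed.

Lemma image_liftK : cancel image_lift to_image.
Proof. by move=> y; apply: val_inj; rewrite /= image_liftE. Qed.

Lemma to_image_surj y : exists x, to_image x = y.
Proof. by exists (image_lift y); exact: image_liftK. Qed.

Definition image_alg : talg Omega :=
  @TAlg Omega image_space (fun n w a => to_image (ops w (image_lift \o a))).

Lemma to_image_hom : is_hom (B := image_alg) to_image.
Proof.
move=> n w a; apply: val_inj; apply: k_compat => i /=.
by rewrite image_liftE.
Qed.

Lemma to_image_continuous : continuous k -> continuous to_image.
Proof. by move=> ck; apply: (@continuous_comp_initial _ _ _ set_val). Qed.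

Lemma image_space_stone : compact [set: A] -> continuous k ->
  hausdorff_space X -> zero_dimensional X -> stone_space image_space.
Proof.
move=> cA ck hX zX; apply/stone_spaceP; split.
- have -> : [set: image_space] = to_image @` setT.
    by apply/seteqP; split => // y _; have [x <-] := to_image_surj y; exists x.
  exact/continuous_compact/cA/continuous_subspaceT/to_image_continuous.
- apply: (@hausdorff_inj _ _ set_val) hX.
    exact: initial_continuous.
  exact: val_inj.
- apply: (@zero_dimensional_inj _ _ set_val) zX.
    exact: initial_continuous.
  exact: val_inj.
Qed.

Lemma image_alg_stone : (forall n, stone_space (Omega n)) -> stone_alg A ->
  continuous k -> hausdorff_space X -> zero_dimensional X -> stone_alg image_alg.
Proof.
move=> HOmega [/stone_spaceP[cA _ _] opsA] ck hX zX.
have sI := image_space_stone cA ck hX zX.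
split=> [//|n]; have /stone_spaceP[_ hI _] := sI.
have /stone_spaceP[cO hO _] := HOmega n.
pose q (p : Omega n * {ptws 'I_n -> A}) :=
  (p.1, to_image \o p.2 : {ptws 'I_n -> image_space}).
apply: (@continuous_factor_compact _ _ _ q).
- exact/compact_setTX/compact_ptws.
- exact/hausdorff_prod/hausdorff_product.
- apply: pair_continuous; first exact: fst_continuous.
  apply: comp_continuous (@snd_continuous _ _) _.
  exact/ptws_comp_continuous/to_image_continuous.
- move=> [w b]; exists (w, image_lift \o b); congr pair.
  by apply: funext => i /=; rewrite image_liftK.
- have -> : (fun p => @ops _ image_alg n p.1 p.2) \o q =
            to_image \o (fun p : Omega n * {ptws 'I_n -> A} => ops p.1 p.2).
    by apply: funext => -[w b]; exact: (esym (to_image_hom w b)).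
  exact: comp_continuous (opsA n) (to_image_continuous ck).
Qed.

End ImageAlgebra.

Lemma is_hom_compat Omega (A B : talg Omega) (f : A -> B) : is_hom f ->
  forall n (w : Omega n) (a b : 'I_n -> A),
  (forall i, f (a i) = f (b i)) -> f (ops w a) = f (ops w b).
Proof. by move=> hf n w a b ab; rewrite !hf; congr ops; apply: funext. Qed.

Lemma image_val_hom Omega (A B : talg Omega) (f : A -> B) :
  is_hom f -> is_hom (B := B) (set_val : image_alg f -> B).
Proof.
move=> hf n w a; rewrite -[LHS]/(f (ops w (@image_lift _ _ _ f \o a))) hf.
congr ops.
by apply: funext => i /=; rewrite image_liftE.
Qed.

Lemma hom_factor Omega (A C Q : talg Omega) (q : A -> C) (k : A -> Q) :
  compact [set: A] -> hausdorff_space C ->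
  is_hom q -> continuous q -> (forall c, exists x, q x = c) ->
  is_hom k -> continuous k -> (forall x y, q x = q y -> k x = k y) ->
  exists h : C -> Q, [/\ is_hom h, continuous h & forall x, h (q x) = k x].
Proof.
move=> cA hC hq cq sq hk ck qk.
have [lift liftK] : exists lift : C -> A, cancel lift q.
  by have [lift ?] := choice sq; exists lift.
have hqk x : k (lift (q x)) = k x by apply: qk; rewrite liftK.
exists (k \o lift); split => //.
- move=> n w a /=.
  have -> : ops w a = q (ops w (lift \o a)).
    by rewrite hq; congr ops; apply: funext => i /=; rewrite liftK.
  by rewrite hqk hk.
- apply: (continuous_factor_compact (q := q)) => //.
  by have -> : k \o lift \o q = k by apply: funext => x /=; exact: hqk.
Qed.

Lemma pseudovariety_factor Omega (SS : talg Omega -> Prop) (A B C : talg Omega)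
    (f : A -> B) (k : A -> C) :
  (forall n, stone_space (Omega n)) -> stone_pseudovariety SS ->
  stone_alg A -> stone_alg C -> SS B ->
  is_hom f -> continuous f -> is_hom k -> continuous k ->
  (forall c, exists x, k x = c) -> (forall x y, f x = f y -> k x = k y) -> SS C.
Proof.
move=> HOmega [_ SS_stone SS_image SS_sub _] sA sC SB hf cf hk ck sk fk.
have /SS_stone[/stone_spaceP[_ hB zB] _] := SB.
have sF : stone_alg (image_alg f).
  exact: image_alg_stone (is_hom_compat hf) HOmega sA cf hB zB.
have SF : SS (image_alg f).
  apply: (SS_sub B (image_alg f) set_val) => //.
    exact: image_val_hom.
  exact: initial_continuous.
have [/stone_spaceP[cA _ _] _] := sA.
have [/stone_spaceP[_ hF _] _] := sF.
have [h [hh ch hfk]] := hom_factor cA hF (to_image_hom (is_hom_compat hf))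
  (to_image_continuous cf) (@to_image_surj _ _ _ f) hk ck
  (fun x y e => fk x y (congr1 val e)).
apply: (SS_image _ _ h) => // c.
by have [x <-] := sk c; exists (to_image f x).
Qed.

Section UnaryPolynomials.
Variables (Omega : nat -> topologicalType) (A : talg Omega).

Inductive upoly : Type :=
  | UVar
  | UConst of A
  | UOp n of Omega n & ('I_n -> upoly).

HB.instance Definition _ := gen_eqMixin upoly.
HB.instance Definition _ := gen_choiceMixin upoly.

Fixpoint ueval (p : upoly) (x : A) : A :=
  match p with
  | UVar => x
  | UConst c => c
  | UOp n w ps => ops w (fun i => ueval (ps i) x)
  end.

Fixpoint usubst (p q : upoly) : upoly :=
  match p with
  | UVar => q
  | UConst c => UConst c
  | UOp n w ps => UOp w (fun i => usubst (ps i) q)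
  end.

Lemma ueval_subst p q x : ueval (usubst p q) x = ueval p (ueval q x).
Proof. by elim: p => //= n w ps IH; congr ops; apply: funext => i. Qed.

Lemma hom_ueval (B : talg Omega) (g : A -> B) : is_hom g ->
  forall p x y, g x = g y -> g (ueval p x) = g (ueval p y).
Proof.
move=> hg p x y gxy; elim: p => //= n w ps IH.
by rewrite !hg; congr ops; apply: funext.
Qed.

Lemma ueval_continuous : stone_alg A -> forall p, continuous (ueval p).
Proof.
move=> [_ opsA]; elim=> [|c|n w ps IH] /=; first by move=> x.
  exact: cst_continuous.
pose args x : Omega n * {ptws 'I_n -> A} := (w, fun i => ueval (ps i) x).
apply: (comp_continuous (f := args)) (opsA n).
apply: pair_continuous; first exact: cst_continuous.
exact: prod_topology_continuous.
Qed.

Definition translation n (w : Omega n) (a : 'I_n -> A) (i : 'I_n) : upoly :=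
  UOp w (fun j => if j == i then UVar else UConst (a j)).

Lemma ueval_translation n (w : Omega n) a i x :
  ueval (translation w a i) x = ops w (fun j => if j == i then x else a j).
Proof. by congr ops; apply: funext => j; case: eqP. Qed.

Lemma ueval_compat (X : Type) (k : A -> X) :
  (forall p x y, k x = k y -> k (ueval p x) = k (ueval p y)) ->
  forall n (w : Omega n) (a b : 'I_n -> A),
  (forall i, k (a i) = k (b i)) -> k (ops w a) = k (ops w b).
Proof.
(* Replace the arguments of [ops w] one at a time; each step is the image of
   a translation polynomial. *)
move=> kp n w a b ab.
pose c m (j : 'I_n) := if (j < m)%N then b j else a j.
suff cmP m : k (ops w a) = k (ops w (c m)).
  by rewrite (cmP n); congr (k (ops w _)); apply: funext => j; rewrite /c ltn_ord.
elim: m => [|m IH]; first by congr (k (ops w _)); apply: funext.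
rewrite IH; have [mn|nm] := ltnP m n; last first.
  congr (k (ops w _)); apply: funext => j; rewrite /c.
  by rewrite !(leq_trans (ltn_ord j)) // (leq_trans nm).
pose i := Ordinal mn.
have cSE j : j != i -> c m.+1 j = c m j.
  move=> ji; rewrite /c ltnS leq_eqVlt; case: eqP => // jm.
  by case/eqP: ji; exact: val_inj.
have -> : ops w (c m) = ueval (translation w (c m) i) (a i).
  rewrite ueval_translation; congr ops; apply: funext => j.
  by case: eqP => [->|]; rewrite // /c ltnn.
have -> : ops w (c m.+1) = ueval (translation w (c m) i) (b i).
  rewrite ueval_translation; congr ops; apply: funext => j.
  by case: eqP => [->|/eqP/cSE]; rewrite // /c ltnSn.
exact: kp (ab i).
Qed.

End UnaryPolynomials.

Section SyntacticCongruence.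
Variables (Omega : nat -> topologicalType) (A : talg Omega) (D : set A).

(* The fibres of syntactic_map are the classes of the syntactic congruence of
   D: x ~ y iff D (p x) <-> D (p y) for every unary polynomial p. *)
Definition syntactic_map (x : A) : {ptws upoly A -> bool} :=
  fun p => `[< D (ueval p x) >].

Lemma syntactic_map_ueval p x y :
  syntactic_map x = syntactic_map y ->
  syntactic_map (ueval p x) = syntactic_map (ueval p y).
Proof.
move=> xy; apply: funext => q.
have := congr1 (fun s => s (usubst q p)) xy.
by rewrite /syntactic_map !ueval_subst.
Qed.

Lemma syntactic_map_compat n (w : Omega n) (a b : 'I_n -> A) :
  (forall i, syntactic_map (a i) = syntactic_map (b i)) ->
  syntactic_map (ops w a) = syntactic_map (ops w b).
Proof. by apply: ueval_compat; exact: syntactic_map_ueval. Qed.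

Lemma syntactic_map_continuous :
  stone_alg A -> clopen D -> continuous syntactic_map.
Proof.
move=> sA cD; apply: prod_topology_continuous => p.
have cI := clopen_indicator_continuous cD.
by have := comp_continuous (ueval_continuous (p := p) sA) cI.
Qed.

Definition syntactic_alg : talg Omega := image_alg syntactic_map.

Definition syntactic_quotient : A -> syntactic_alg := to_image syntactic_map.

Lemma syntactic_quotient_hom : is_hom syntactic_quotient.
Proof. exact/to_image_hom/syntactic_map_compat. Qed.

Lemma syntactic_quotient_surj y : exists x, syntactic_quotient x = y.
Proof. exact: to_image_surj. Qed.

Lemma syntactic_quotient_continuous :
  stone_alg A -> clopen D -> continuous syntactic_quotient.
Proof. by move=> sA cD; exact/to_image_continuous/syntactic_map_continuous. Qed.

Lemma syntactic_quotient_saturated (B : talg Omega) (g : A -> B) : is_hom g ->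
  (forall x y, g x = g y -> D x -> D y) ->
  forall x y, g x = g y -> syntactic_quotient x = syntactic_quotient y.
Proof.
move=> hg gD x y gxy; apply: val_inj; apply: funext => p /=; congr asbool.
by apply: propext; split; apply: gD; rewrite (hom_ueval hg p gxy).
Qed.

Lemma syntactic_quotient_mem x y :
  syntactic_quotient x = syntactic_quotient y -> D x -> D y.
Proof.
move=> /(congr1 (fun z : syntactic_alg => set_val z (UVar A))).
by rewrite !to_imageE /syntactic_map /= => xy /asboolP; rewrite xy => /asboolP.
Qed.

Lemma syntactic_alg_stone : (forall n, stone_space (Omega n)) ->
  stone_alg A -> clopen D -> stone_alg syntactic_alg.
Proof.
move=> HOmega sA cD.
apply: (image_alg_stone syntactic_map_compat HOmega sA).
- exact: syntactic_map_continuous.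
- exact: hausdorff_product (fun=> discrete_hausdorff).
- exact: zero_dimension_prod (fun=> discrete_zero_dimension).
Qed.

End SyntacticCongruence.

Lemma residually_separate_clopen Omega (SS : talg Omega -> Prop) (A : talg Omega)
    (D : set A) :
  stone_pseudovariety SS -> compact [set: A] -> residually SS A -> clopen D ->
  exists (B : talg Omega) (f : A -> B),
    [/\ SS B, is_hom f, continuous f & forall x y, D x -> ~ D y -> f x <> f y].
Proof.
move=> [_ SS_stone _ _ SS_prod] cA res [oD clD].
pose K := D `*` ~` D.
have sep (i : set_type K) : exists Bf : {B : talg Omega & A -> B},
    [/\ SS (projT1 Bf), is_hom (projT2 Bf), continuous (projT2 Bf)
      & projT2 Bf (val i).1 <> projT2 Bf (val i).2].
  have [Dx nDy] := set_valP i.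
  have [|B [f [SB hf cf fxy]]] := res (val i).1 (val i).2.
    by move=> xy; apply: nDy; rewrite -xy.
  by exists (existT _ B f).
have [Bf BfP] := choice sep.
pose U (i : set_type K) :=
  [set uv : A * A | projT2 (Bf i) uv.1 <> projT2 (Bf i) uv.2].
have cK : compact K.
  apply: compact_setX; apply: subclosed_compact cA _ => //.
  exact: open_closedC.
have [F _ KF] : finite_subset_cover [set: set_type K] U K.
  apply: (compact_cover_compact cK) => [i _|uv Kuv].
    have [/SS_stone[/stone_spaceP[_ hB _] _] _ cf _] := BfP i.
    have c1 := comp_continuous (@fst_continuous A A) cf.
    have c2 := comp_continuous (@snd_continuous A A) cf.
    exact: open_fun_neq hB c1 c2.
  exists (SigSub (mem_set Kuv)) => //.
  by have [] := BfP (SigSub (mem_set Kuv)).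
exists (prod_alg (fun i : F => projT1 (Bf (val i)))).
exists (fun x (i : F) => projT2 (Bf (val i)) x); split.
- by apply: SS_prod => i; have [] := BfP (val i).
- move=> n w a; apply: functional_extensionality_dep => i /=.
  by have [_ hf _ _] := BfP (val i); rewrite hf.
- by apply: prod_topology_continuous => i; have [] := BfP (val i).
- move=> x y Dx nDy /(congr1 (fun g => g _)) fxy.
  have [i Fi /= sep_i] := KF (x, y) (conj Dx nDy).
  exact/sep_i/(fxy (FSetSub Fi)).
Qed.

Theorem theorem5p12 (Omega : nat -> topologicalType)
  (HOmega : forall n, stone_space (Omega n))
  (SS : talg Omega -> Prop) (HSS : stone_pseudovariety SS)
  (S T : talg Omega) (phi : S -> T)
  (HS : stone_alg S) (HT : stone_alg T)
  (hom_phi : is_hom phi) (cont_phi : continuous phi)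
  (onto_phi : forall t : T, exists s : S, phi s = t) :
  residually SS S -> residually SS T.
Proof.
move=> res t1 t2 t12.
have [s1 e1] := onto_phi t1; have [s2 e2] := onto_phi t2; subst t1 t2.
have [/stone_spaceP[cS _ _] _] := HS; have [/stone_spaceP[_ hT zT] _] := HT.
have [C [cC Cs1 nCs2]] := zT _ _ (introN eqP t12).
pose D := phi @^-1` C; have cD : clopen D by exact: preimage_clopen.
have [B [f [SB hf cf sepf]]] := residually_separate_clopen HSS cS res cD.
have q_cont := syntactic_quotient_continuous HS cD.
have SQ : SS (syntactic_alg D).
  apply: (pseudovariety_factor HOmega HSS HS (syntactic_alg_stone HOmega HS cD)
    SB hf cf (syntactic_quotient_hom D) q_cont (@syntactic_quotient_surj _ _ D)).
  apply: syntactic_quotient_saturated hf _ => x y fxy Dx.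
  by apply: contrapT => /(sepf x y Dx).
have phi_D x y : phi x = phi y -> D x -> D y by rewrite /D /preimage /= => ->.
have [g [hg cg gq]] := hom_factor cS hT hom_phi cont_phi onto_phi
  (syntactic_quotient_hom D) q_cont (syntactic_quotient_saturated hom_phi phi_D).
exists (syntactic_alg D), g; split => //.
by rewrite !gq => /syntactic_quotient_mem /(_ Cs1).
Qed.
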